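(* Let $K\ge 2$ and let $r_1\prec r_2\prec\cdots\prec r_K$ be ordered ranks. Let $D=\{(\mathbf{x}_i,y_i)\}_{i=1}^N$ be a training set with inputs $\mathbf{x}_i\in\mathcal{X}$ and ranks $y_i\in\{r_1,\dots,r_K\}$, and for $k=1,\dots,K-1$ define the extended binary labels $y_i^{(k)}=\mathbb{1}\{y_i\succ r_k\}\in\{0,1\}$. Let $g(\mathbf{x},\mathbf{W})\in\mathbb{R}$ be the (scalar) output of a model with parameters $\mathbf{W}$, let $\mathbf{b}=(b_1,\dots,b_{K-1})\in\mathbb{R}^{K-1}$ be bias parameters, let $\sigma(z)=1/(1+\exp(-z))$, and let $\lambda^{(1)},\dots,\lambda^{(K-1)}>0$ be fixed task weights. Consider the loss $$L(\mathbf{W},\mathbf{b})=-\sum_{i=1}^N\sum_{k=1}^{K-1}\lambda^{(k)}\Big[\log\big(\sigma(g(\mathbf{x}_i,\mathbf{W})+b_k)\big)\,y_i^{(k)}+\log\big(1-\sigma(g(\mathbf{x}_i,\mathbf{W})+b_k)\big)\,(1-y_i^{(k)})\Big].$$ Then any optimal solution $(\mathbf{W}^*,\mathbf{b}^* )$ minimizing $L$ satisfies $b_1^*\ge b_2^*\ge\cdots\ge b_{K-1}^*$.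
   Context: This is the loss of the CORAL (consistent rank logits) framework: a single shared score $g(\mathbf{x},\mathbf{W})$ is fed to $K-1$ binary classifiers that differ only in their bias terms $b_k$; the predicted probability for task $k$ is $\widehat P(y^{(k)}=1)=\sigma(g(\mathbf{x},\mathbf{W})+b_k)$. *)

From HB Require Import structures.
From mathcomp Require Import all_boot all_order all_algebra.
From mathcomp Require Import all_classical all_reals all_analysis.
Set Implicit Arguments. Unset Strict Implicit. Unset Printing Implicit Defensive.
Import Order.TTheory GRing.Theory Num.Theory.
Local Open Scope ring_scope.

Definition sigmoid {R : realType} (z : R) : R := 1 / (1 + expR (- z)).

(* Ranks r_1 < ... < r_K are represented by 'I_K (0-based, natural order).
   Tasks k = 1..K-1 are represented 0-based by k : 'I_K.-1; task k' (0-based)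
   corresponds to rank threshold r_{k'+1}, i.e. index k' of 'I_K.
   y_i^{(k)} = 1{ y_i > r_k }  becomes  (k' < y_i). *)
Definition ext_label {R : realType} (K N : nat) (y : 'I_N -> 'I_K)
  (i : 'I_N) (k : 'I_K.-1) : R :=
  if (nat_of_ord k < nat_of_ord (y i))%N then 1 else 0.

Definition coral_loss {R : realType} (X Wt : Type) (K N : nat)
  (g : X -> Wt -> R) (x : 'I_N -> X) (y : 'I_N -> 'I_K)
  (lam : 'I_K.-1 -> R) (W : Wt) (b : 'I_K.-1 -> R) : R :=
  - \sum_(i < N) \sum_(k < K.-1)
      lam k * (ln (sigmoid (g (x i) W + b k)) * @ext_label R _ _ y i k
               + ln (1 - sigmoid (g (x i) W + b k)) * (1 - @ext_label R _ _ y i k)).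

(* Each binary task contributes the cross-entropy [softplus (s + b_k) - y^(k) (s + b_k)], so for
   fixed W the loss in b_k is [F b_k - n_k b_k] up to a constant, where F is the same strictly
   convex function for every task and n_k counts the examples ranked above r_k.  At an optimum
   each b_k minimizes its own tilted function, and minimizers of [F z - a z] are monotone in the
   slope a, while n_k is nonincreasing in k. *)
From HB Require Import structures.
From mathcomp Require Import all_boot all_order all_algebra.
From mathcomp Require Import all_classical all_reals all_analysis.
From mathcomp Require Import ring lra.
Import Order.TTheory GRing.Theory Num.Theory.
Local Open Scope ring_scope.

Section StrictMidpointConvexity.
Context {R : realType}.

Definition strictly_midconvex (F : R -> R) :=
  forall u v, u != v -> 2 * F ((u + v) / 2) < F u + F v.

Lemma strictly_midconvex_shift (F : R -> R) (s : R) :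
  strictly_midconvex F -> strictly_midconvex (fun z => F (s + z)).
Proof.
move=> convF u v neq_uv /=.
have -> : s + (u + v) / 2 = ((s + u) + (s + v)) / 2 by field.
by apply: convF; rewrite (can_eq (addKr s)).
Qed.

Lemma strictly_midconvex_sum (I : finType) (F : I -> R -> R) :
  (0 < #|I|)%N -> (forall i, strictly_midconvex (F i)) ->
  strictly_midconvex (fun z => \sum_i F i z).
Proof.
move=> /card_gt0P [i0 _] convF u v neq_uv /=.
rewrite mulr_sumr -big_split /=; apply: ltr_sum => [|i _]; last exact: convF.
by apply/hasP; exists i0; rewrite ?mem_index_enum.
Qed.

(* Both optimality conditions at the midpoint [m] of [u < v] together give
   [F u + F v - 2 F m <= (c - a)(v - u)/2 <= 0]. *)
Lemma tilted_argmin_monotone {F : R -> R} {a c u v : R} :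
  strictly_midconvex F -> c <= a ->
  (forall z, F u - a * u <= F z - a * z) ->
  (forall z, F v - c * v <= F z - c * z) ->
  v <= u.
Proof.
move=> convF le_ca min_u min_v; rewrite leNgt; apply/negP => lt_uv.
set m := (u + v) / 2.
have := convF u v (negbT (lt_eqF lt_uv)); have := min_u m; have := min_v m.
have : 0 <= (a - c) * (v - u) by rewrite mulr_ge0 // subr_ge0 // ltW.
rewrite /m; lra.
Qed.

End StrictMidpointConvexity.

Section Softplus.
Context {R : realType}.

Definition softplus (z : R) : R := ln (1 + expR z).

Lemma softplus_strictly_midconvex : strictly_midconvex softplus.
Proof.
move=> u v neq_uv; set a := expR (u / 2); set c := expR (v / 2).
have a_gt0 : 0 < a by apply: expR_gt0.
have c_gt0 : 0 < c by apply: expR_gt0.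
have expR_half (w : R) : expR w = expR (w / 2) * expR (w / 2).
  by rewrite -expRD; congr expR; field.
have neq_ac : a != c.
  by apply: contra neq_uv => /eqP /expR_inj eq_half; apply/eqP; lra.
rewrite /softplus (expR_half u) (expR_half v) -/a -/c.
have -> : expR ((u + v) / 2) = a * c by rewrite -expRD; congr expR; field.
rewrite -lnM ?posrE; try nra.
rewrite -[2]/(1 + 1) mulrDl mul1r -lnM ?posrE; try nra.
(* [(1 + a c)^2 < (1 + a^2)(1 + c^2)] is [0 < (a - c)^2]. *)
have : 0 < (a - c) ^+ 2 by rewrite exprn_even_gt0 // subr_eq0.
rewrite ltr_ln ?posrE; nra.
Qed.

Lemma sigmoid_cross_entropy (z e : R) :
  - (ln (sigmoid z) * e + ln (1 - sigmoid z) * (1 - e)) = softplus z - e * z.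
Proof.
have ez_gt0 := expR_gt0 z.
have -> : sigmoid z = expR z / (1 + expR z).
  by rewrite /sigmoid expRN; field; rewrite gt_eqF //; lra.
have -> : 1 - expR z / (1 + expR z) = (1 + expR z)^-1 by field; rewrite gt_eqF //; lra.
rewrite lnM ?lnV ?expRK ?posrE ?invr_gt0 /softplus; lra.
Qed.

End Softplus.

Lemma weighted_sum_argmin_coord (R : realType) (I : finType) (lam : I -> R)
    (f : I -> R -> R) (b : I -> R) :
  (forall k, 0 < lam k) ->
  (forall b', \sum_k lam k * f k (b k) <= \sum_k lam k * f k (b' k)) ->
  forall j z, f j (b j) <= f j z.
Proof.
move=> lam_gt0 min_b j z.
have := min_b (fun k => if k == j then z else b k).
rewrite [X in X <= _](bigD1 j) // [X in _ <= X](bigD1 j) //= eqxx.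
under [in X in _ <= X]eq_bigr => k neq_kj do rewrite (negbTE neq_kj).
by rewrite lerD2r ler_pM2l.
Qed.

Section CoralTasks.
Context {R : realType} {X Wt : Type} {K N : nat}.
Variables (g : X -> Wt -> R) (x : 'I_N -> X) (y : 'I_N -> 'I_K).

Definition score_softplus (W : Wt) (z : R) : R := \sum_i softplus (g (x i) W + z).

Definition rank_count (k : 'I_K.-1) : R := \sum_i ext_label (R := R) y i k.

Definition task_loss (W : Wt) (k : 'I_K.-1) (z : R) : R :=
  score_softplus W z - rank_count k * z - \sum_i ext_label (R := R) y i k * g (x i) W.

Lemma coral_lossE (lam : 'I_K.-1 -> R) (W : Wt) (b : 'I_K.-1 -> R) :
  coral_loss g x y lam W b = \sum_k lam k * task_loss W k (b k).
Proof.
rewrite /coral_loss exchange_big -sumrN; apply: eq_bigr => k _.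
rewrite -mulr_sumr -mulrN -sumrN /task_loss /score_softplus /rank_count mulr_suml -!sumrB.
by congr (_ * _); apply: eq_bigr => i _; rewrite sigmoid_cross_entropy; ring.
Qed.

Lemma ext_label_antitone (i : 'I_N) (k1 k2 : 'I_K.-1) :
  (k1 <= k2)%N -> ext_label (R := R) y i k2 <= ext_label (R := R) y i k1.
Proof.
rewrite /ext_label => le_k; case: ifP => [lt_k2 | _]; last by case: ifP.
by rewrite (leq_ltn_trans le_k lt_k2).
Qed.

Lemma rank_count_antitone {k1 k2 : 'I_K.-1} :
  (k1 <= k2)%N -> rank_count k2 <= rank_count k1.
Proof. by move=> le_k; apply: ler_sum => i _; apply: ext_label_antitone. Qed.

Lemma score_softplus_strictly_midconvex (W : Wt) :
  (0 < N)%N -> strictly_midconvex (score_softplus W).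
Proof.
move=> N_gt0; apply: strictly_midconvex_sum => [|i]; first by rewrite card_ord.
exact/strictly_midconvex_shift/softplus_strictly_midconvex.
Qed.

End CoralTasks.

Theorem theorem1 (R : realType) (X Wt : Type) (K N : nat)
  (hK : (2 <= K)%N) (hN : (0 < N)%N)
  (x : 'I_N -> X) (y : 'I_N -> 'I_K) (g : X -> Wt -> R)
  (lam : 'I_K.-1 -> R) (hlam : forall k, 0 < lam k)
  (Wstar : Wt) (bstar : 'I_K.-1 -> R)
  (hopt : forall (W : Wt) (b : 'I_K.-1 -> R),
      coral_loss g x y lam Wstar bstar <= coral_loss g x y lam W b) :
  forall k1 k2 : 'I_K.-1, (k1 <= k2)%N -> bstar k2 <= bstar k1.
Proof.
move=> k1 k2 le_k.
have opt_task (k : 'I_K.-1) (z : R) :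
    score_softplus g x Wstar (bstar k) - rank_count y k * bstar k
    <= score_softplus g x Wstar z - rank_count y k * z.
  have := @weighted_sum_argmin_coord R _ lam (task_loss g x y Wstar) bstar hlam _ k z.
  by rewrite lerD2r; apply => b; rewrite -!coral_lossE.
exact: (tilted_argmin_monotone (score_softplus_strictly_midconvex g x Wstar hN)
          (rank_count_antitone y le_k) (opt_task k1) (opt_task k2)).
Qed.
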